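(* For $n\ge2$ and all $P,Q\in\Gamma_n$, $D_{hI}(P\|Q)\le \frac12 D_{TJ}(P\|Q)$.
   Context: $\Gamma_n=\{P=(p_1,\dots,p_n): p_i>0,\ \sum p_i=1\}$. $h(P\|Q)=\frac12\sum_{i=1}^n(\sqrt{p_i}-\sqrt{q_i})^2$; $I(P\|Q)=\frac12\Big[\sum_{i=1}^n p_i\ln\frac{2p_i}{p_i+q_i}+\sum_{i=1}^n q_i\ln\frac{2q_i}{p_i+q_i}\Big]$; $J(P\|Q)=\sum_{i=1}^n(p_i-q_i)\ln\frac{p_i}{q_i}$; $T(P\|Q)=\sum_{i=1}^n\frac{p_i+q_i}{2}\ln\frac{p_i+q_i}{2\sqrt{p_iq_i}}$. $D_{hI}=h-I$, $D_{TJ}=T-\frac18J$. *)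

From HB Require Import structures.
From mathcomp Require Import all_boot all_order all_algebra.
From mathcomp Require Import all_classical all_reals.
From mathcomp Require Import exp.
Set Implicit Arguments. Unset Strict Implicit. Unset Printing Implicit Defensive.
Import Order.TTheory GRing.Theory Num.Theory.
Local Open Scope ring_scope.

Definition in_Gamma (R : realType) (n : nat) (P : 'I_n -> R) : Prop :=
  (forall i, 0 < P i) /\ \sum_(i < n) P i = 1.

Definition hdiv (R : realType) n (P Q : 'I_n -> R) : R :=
  2^-1 * \sum_(i < n) (Num.sqrt (P i) - Num.sqrt (Q i)) ^+ 2.

Definition Idiv (R : realType) n (P Q : 'I_n -> R) : R :=
  2^-1 * (\sum_(i < n) P i * ln (2 * P i / (P i + Q i))
        + \sum_(i < n) Q i * ln (2 * Q i / (P i + Q i))).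

Definition Jdiv (R : realType) n (P Q : 'I_n -> R) : R :=
  \sum_(i < n) (P i - Q i) * ln (P i / Q i).

Definition Tdiv (R : realType) n (P Q : 'I_n -> R) : R :=
  \sum_(i < n) (P i + Q i) / 2 * ln ((P i + Q i) / (2 * Num.sqrt (P i * Q i))).

Definition D_hI (R : realType) n (P Q : 'I_n -> R) : R := hdiv P Q - Idiv P Q.
Definition D_TJ (R : realType) n (P Q : 'I_n -> R) : R := Tdiv P Q - 8^-1 * Jdiv P Q.

(* The inequality holds summand by summand.  For
   p = a^2 and q = b^2 the difference of the two summands is b^2 * gap (a/b),
   a one-variable function with gap 1 = 0 and gap' t = t * gap_rate t.  Since
   gap_rate 1 = 0 and gap_rate' t = (t-1)^4 / (4 t^3 (t^2+1)) >= 0, gap_rate and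
   hence gap' have the sign of t - 1, so gap is minimal, and zero, at t = 1. *)
From mathcomp Require Import all_boot all_order all_algebra.
From mathcomp Require Import all_classical all_reals.
From mathcomp Require Import exp.
From mathcomp Require Import normedtype derive realfun.
From mathcomp Require Import ring lra.
Import Order.TTheory GRing.Theory Num.Theory.
Import numFieldNormedType.Exports.
Local Open Scope ring_scope.

Section DeriveSign.
Context {R : realType} (f df : R -> R).
Hypothesis f_df : forall x : R, 0 < x -> is_derive x 1 f (df x).

Lemma MVT_pos {a b : R} : 0 < a -> a < b ->
  exists2 c, c \in `]a, b[ & f b - f a = df c * (b - a).
Proof.
move=> a_gt0 ab; apply: MVT => // [x|].
  by rewrite in_itv /= => /andP[ax _]; apply: f_df; apply: lt_trans ax.
apply: derivable_within_continuous => x; rewrite in_itv /= => /andP[ax _].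
by have [] := f_df x (lt_le_trans a_gt0 ax).
Qed.

Lemma derive_ge0_sign (t : R) : 0 < t -> f 1 = 0 ->
  (forall x : R, 0 < x -> 0 <= df x) -> 0 <= (t - 1) * f t.
Proof.
move=> t_gt0 f1 df_ge0.
have [t1|t1|->] := ltgtP t 1; last by rewrite subrr mul0r.
- have [c tc1] := MVT_pos t_gt0 t1.
  have dfc_ge0 : 0 <= df c by apply: df_ge0; rewrite (lt_trans t_gt0) ?(itvP tc1).
  rewrite f1 sub0r => /eqP; rewrite eqr_oppLR => /eqP ->.
  by rewrite mulrN -mulNr opprB !mulr_ge0 // subr_ge0 ltW.
- have [c c1t] := MVT_pos ltr01 t1.
  have dfc_ge0 : 0 <= df c by apply: df_ge0; rewrite (lt_trans ltr01) ?(itvP c1t).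
  by rewrite f1 subr0 => ->; rewrite !mulr_ge0 // subr_ge0 ltW.
Qed.

Lemma derive_sign_ge0 (t : R) : 0 < t -> f 1 = 0 ->
  (forall x : R, 0 < x -> 0 <= (x - 1) * df x) -> 0 <= f t.
Proof.
move=> t_gt0 f1 sign_df.
have [t1|t1|->] := ltgtP t 1; last by rewrite f1.
- have [c tc1] := MVT_pos t_gt0 t1.
  have tc : t < c by rewrite (itvP tc1).
  have c1 : c < 1 by rewrite (itvP tc1).
  have dfc_le0 : df c <= 0.
    have := sign_df c (lt_trans t_gt0 tc).
    by rewrite nmulr_rge0 // subr_lt0.
  rewrite f1 sub0r => /eqP; rewrite eqr_oppLR => /eqP ->.
  by rewrite oppr_ge0 mulr_le0_ge0 // subr_ge0 ltW.
- have [c c1t] := MVT_pos ltr01 t1.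
  have c1 : 1 < c by rewrite (itvP c1t).
  have dfc_ge0 : 0 <= df c.
    have := sign_df c (lt_trans ltr01 c1).
    by rewrite pmulr_rge0 // subr_gt0.
  by rewrite f1 subr0 => ->; rewrite mulr_ge0 // subr_ge0 ltW.
Qed.

End DeriveSign.

Section Gap.
Context {R : realType}.
Implicit Types t : R.

Definition ln_sqmean t := ln ((t ^+ 2 + 1) / 2).

Definition gap_rate t :=
  5 / 4 * ln t - 2^-1 * ln_sqmean t - 7 / 8 + t^-1 - 8^-1 * (t ^+ 2)^-1.

Definition gap t :=
  (5 * t ^+ 2 - 1) / 8 * ln t - (t ^+ 2 + 1) / 4 * ln_sqmean t - (t - 1) ^+ 2 / 2.

Lemma sqrp1_gt0 t : 0 < t ^+ 2 + 1.
Proof. by rewrite ltr_wpDl ?sqr_ge0. Qed.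

Lemma sqrp1_neq0 t : t ^+ 2 + 1 != 0.
Proof. by rewrite gt_eqF ?sqrp1_gt0. Qed.

Lemma is_derive_ln_sqmean t : is_derive t 1 ln_sqmean (2 * t / (t ^+ 2 + 1)).
Proof.
have sqmean_gt0 : 0 < (t ^+ 2 + 1) / 2 by rewrite divr_gt0 ?sqrp1_gt0.
apply: is_derive_eq.
  exact: (is_derive1_comp (g := fun t => (t ^+ 2 + 1) / 2) (is_derive1_ln sqmean_gt0)).
rewrite /= scaler0 add0r addr0 /GRing.scale /= !mulr1.
by field; rewrite sqrp1_neq0.
Qed.

Lemma is_derive_gap_rate t : 0 < t ->
  is_derive t 1 gap_rate ((t - 1) ^+ 4 / (4 * t ^+ 3 * (t ^+ 2 + 1))).
Proof.
move=> t_gt0; have t_neq0 : t != 0 by rewrite gt_eqF.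
have := is_derive1_ln t_gt0; have := is_derive_ln_sqmean t.
have := is_deriveV t_neq0 (is_derive_id t 1).
have := is_deriveV (f := fun y => y ^+ 2) (expf_neq0 2 t_neq0) _.
move=> ? ? ? ?; apply: is_derive_eq.
rewrite /GRing.scale /= !mulr1.
by field; rewrite t_neq0 sqrp1_neq0.
Qed.

Lemma is_derive_gap t : 0 < t -> is_derive t 1 gap (t * gap_rate t).
Proof.
move=> t_gt0; have t_neq0 : t != 0 by rewrite gt_eqF.
have := is_derive1_ln t_gt0; have := is_derive_ln_sqmean t.
move=> ? ?; apply: is_derive_eq; rewrite /GRing.scale /= /gap_rate.
by field; rewrite t_neq0 sqrp1_neq0.
Qed.

Lemma ln_sqmean1 : ln_sqmean 1 = 0.
Proof. by rewrite /ln_sqmean expr1n divff ?ln1 // lt0r_neq0 ?addr_gt0. Qed.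

Lemma gap_rate1 : gap_rate 1 = 0.
Proof. rewrite /gap_rate ln_sqmean1 ln1 expr1n !invr1 !mulr0 mulr1; lra. Qed.

Lemma gap1 : gap 1 = 0.
Proof. rewrite /gap ln_sqmean1 ln1 subrr expr0n /= !mulr0 mul0r; lra. Qed.

Lemma gap_rate_sign t : 0 < t -> 0 <= (t - 1) * gap_rate t.
Proof.
move=> t_gt0.
apply: (@derive_ge0_sign _ _ (fun x => (x - 1) ^+ 4 / (4 * x ^+ 3 * (x ^+ 2 + 1)))
  is_derive_gap_rate _ t_gt0 gap_rate1) => x x_gt0.
by rewrite divr_ge0 ?exprn_even_ge0 // ltW // !mulr_gt0 ?exprn_gt0 ?sqrp1_gt0.
Qed.

Lemma gap_ge0 t : 0 < t -> 0 <= gap t.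
Proof.
move=> t_gt0.
apply: (@derive_sign_ge0 _ _ (fun x => x * gap_rate x) is_derive_gap _ t_gt0 gap1).
move=> x x_gt0 /=; rewrite mulrCA.
by apply: mulr_ge0; [exact: ltW | exact: gap_rate_sign].
Qed.

End Gap.

Section Summands.
Context {R : realType}.
Implicit Types p q : R.

Definition hI_summand p q :=
  2^-1 * (Num.sqrt p - Num.sqrt q) ^+ 2
  - 2^-1 * (p * ln (2 * p / (p + q)) + q * ln (2 * q / (p + q))).

Definition TJ_summand p q :=
  2^-1 * ((p + q) / 2 * ln ((p + q) / (2 * Num.sqrt (p * q)))
          - 8^-1 * ((p - q) * ln (p / q))).

Lemma D_hI_sum n (P Q : 'I_n -> R) :
  D_hI P Q = \sum_(i < n) hI_summand (P i) (Q i).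
Proof. by rewrite /D_hI /hdiv /Idiv -big_split /= !mulr_sumr -sumrB. Qed.

Lemma half_D_TJ_sum n (P Q : 'I_n -> R) :
  2^-1 * D_TJ P Q = \sum_(i < n) TJ_summand (P i) (Q i).
Proof. by rewrite /D_TJ /Tdiv /Jdiv mulr_sumr -sumrB mulr_sumr. Qed.

Lemma TJ_sub_hI_summand (a b : R) : 0 < a -> 0 < b ->
  TJ_summand (a ^+ 2) (b ^+ 2) - hI_summand (a ^+ 2) (b ^+ 2) = b ^+ 2 * gap (a / b).
Proof.
move=> a_gt0 b_gt0; have b_neq0 : b != 0 by rewrite gt_eqF.
have a2_gt0 : 0 < a ^+ 2 by rewrite exprn_gt0.
have b2_gt0 : 0 < b ^+ 2 by rewrite exprn_gt0.
have s_gt0 : 0 < (a ^+ 2 + b ^+ 2) / 2 by rewrite divr_gt0 ?addr_gt0.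
rewrite /TJ_summand /hI_summand /gap -exprMn !sqrtr_sqr !gtr0_norm ?mulr_gt0 //.
have -> : ln (2 * a ^+ 2 / (a ^+ 2 + b ^+ 2))
          = ln (a ^+ 2) - ln ((a ^+ 2 + b ^+ 2) / 2).
  by rewrite -ln_div //; congr ln; field; rewrite gt_eqF ?addr_gt0.
have -> : ln (2 * b ^+ 2 / (a ^+ 2 + b ^+ 2))
          = ln (b ^+ 2) - ln ((a ^+ 2 + b ^+ 2) / 2).
  by rewrite -ln_div //; congr ln; field; rewrite gt_eqF ?addr_gt0.
have -> : ln ((a ^+ 2 + b ^+ 2) / (2 * (a * b)))
          = ln ((a ^+ 2 + b ^+ 2) / 2) - (ln a + ln b).
  have ab_gt0 : 0 < a * b by rewrite mulr_gt0.
  rewrite -lnM // -ln_div //; congr ln; field.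
  by rewrite b_neq0 gt_eqF.
have -> : ln_sqmean (a / b) = ln ((a ^+ 2 + b ^+ 2) / 2) - ln (b ^+ 2).
  by rewrite /ln_sqmean -ln_div //; congr ln; field.
rewrite (ln_div a2_gt0 b2_gt0) (ln_div a_gt0 b_gt0) !lnXn //.
move: (ln a) (ln b) (ln ((a ^+ 2 + b ^+ 2) / 2)) => la lb lm.
by rewrite !mulr2n; field.
Qed.

Lemma hI_le_TJ_summand p q : 0 < p -> 0 < q -> hI_summand p q <= TJ_summand p q.
Proof.
move=> p_gt0 q_gt0; rewrite -subr_ge0.
rewrite -(sqr_sqrtr (ltW p_gt0)) -(sqr_sqrtr (ltW q_gt0)).
rewrite TJ_sub_hI_summand ?sqrtr_gt0 // mulr_ge0 ?sqr_ge0 // gap_ge0 //.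
by rewrite divr_gt0 ?sqrtr_gt0.
Qed.

End Summands.

Theorem proposition5p3 (R : realType) (n : nat) (hn : (2 <= n)%N)
  (P Q : 'I_n -> R) (hP : in_Gamma P) (hQ : in_Gamma Q) :
  D_hI P Q <= 2^-1 * D_TJ P Q.
Proof.
rewrite D_hI_sum half_D_TJ_sum; apply: ler_sum => i _.
exact: hI_le_TJ_summand (hP.1 i) (hQ.1 i).
Qed.
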